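(* Let $\mathcal{W}=(A,\to,\mathbb{S},\mathsf{f}_{\mathtt{NF}},\mathsf{Aggr})$ be a wARS, let $a\in A$, and let $\mathfrak{T}$ be an $(A,\to)$-reduction tree of finite depth whose root $r$ and some leaf $v_0\neq r$ are both labeled with $a$. Let $t\in S$ satisfy $\bigoplus_{i=1}^{\infty}t=\top$. If $\mathcal{P}_{v_0}(\mathfrak{T})(s)\succcurlyeq s\oplus t$ for all $s\in S$, then $[\![a]\!]=\top$.
   Context: A semiring $\mathbb{S}=(S,\oplus,\odot,\mathbf{0},\mathbf{1})$: $(S,\oplus,\mathbf{0})$ commutative monoid, $(S,\odot,\mathbf{1})$ monoid, $\odot$ distributes over $\oplus$, $\mathbf{0}$ annihilator. Natural order: $s\preccurlyeq t$ iff $s\oplus u=t$ for some $u$. A complete lattice semiring is one where $\preccurlyeq$ is antisymmetric and every subset $T\subseteq S$ has a least upper bound $\bigsqcup T$; $\top=\bigsqcup S$. For an infinite sequence, $\bigoplus_{i=1}^\infty s_i=\bigsqcup\{s_1\oplus\cdots\oplus s_n\mid n\ge1\}$, and similarly for infinite products. $\mathrm{Seq}(X)$: non-empty finite or infinite sequences over $X$. An sARS is $(A,\to)$ with $\to\subseteq A\times\mathrm{Seq}(A)$; $\mathtt{NF}_\to$ is the set of $a$ with no $B$ such that $a\to B$. An $(A,\to)$-reduction tree (RT) is a labeled ordered tree whose nodes $v$ carry labels $a_v\in A$ and whose ordered child sequence $vE$ is either empty or satisfies $a_v\to[a_w\mid w\in vE]$. Aggregators: smallest set containing constants $s\in S$,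 variables $v_1,v_2,\dots$, and $\bigoplus F$, $\bigodot F$ for non-empty finite or infinite sequences $F$ of aggregators; they induce functions by substituting the $i$-th argument for $v_i$. A wARS $(A,\to,\mathbb{S},\mathsf{f}_{\mathtt{NF}},\mathsf{Aggr})$ consists of an sARS, a complete lattice semiring $\mathbb{S}$, a map $\mathsf{f}_{\mathtt{NF}}:\mathtt{NF}_\to\to S$, and for each $a\to B$ an aggregator $\mathsf{Aggr}_{a\to B}$ with variable indices $\le|B|$, viewed as a function $S^{|B|}\to S$. Weight of a finite-depth RT $\mathfrak{T}$ at node $v$: $\mathsf{f}_{\mathtt{NF}}(a_v)$ if $a_v\in\mathtt{NF}_\to$; $\mathbf{0}$ if $v$ is a leaf with $a_v\notin\mathtt{NF}_\to$; $\mathsf{Aggr}_{a_v\to B}[$weights of the children in order$]$ with $B=[a_w\mid w\in vE]$ otherwise; $[\![\mathfrak{T}]\!]$ is the weight at the root. $[\![a]\!]=\bigsqcup\{[\![\mathfrak{T}]\!]\mid\mathfrak{T}$ a finite-depth RT with root labeled $a\}$. Induced weight polynomial: for a finite-depth RT $\mathfrak{T}$ with a leaf $v_0$ and a variable $X$, define $[\![\mathfrak{T}]\!]^{v_0}_{v_0}=X$; for $v\neq v_0$ with $a_v\in\mathtt{NF}_\to$, $[\![\mathfrak{T}]\!]^{v_0}_v=\mathsf{f}_{\mathtt{NF}}(a_v)$; for a leaf $v\neq v_0$ with $a_v\notin\mathtt{NF}_\to$, $[\![\mathfrak{T}]\!]^{v_0}_v=\mathbf{0}$; for an inner node $v$,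 $[\![\mathfrak{T}]\!]^{v_0}_v=\mathsf{Aggr}_{a_v\to B}[[\![\mathfrak{T}]\!]^{v_0}_w\mid w\in vE]$ with $B=[a_w\mid w\in vE]$. Then $\mathcal{P}_{v_0}(\mathfrak{T})=[\![\mathfrak{T}]\!]^{v_0}_r$ (with $r$ the root) is an expression in $X$, and $\mathcal{P}_{v_0}(\mathfrak{T})(s)$ denotes its value when $X$ is replaced by $s\in S$. *)

From mathcomp Require Import all_boot.
From Stdlib Require Import ClassicalEpsilon.

Set Implicit Arguments.
Unset Strict Implicit.
Unset Printing Implicit Defensive.

(* The natural order is  s <= t  iff  exists u, s + u = t.              *)
(* Every subset has a least upper bound [sup]; since the natural order  *)
(* is antisymmetric, the lub is unique, so giving it as a field is the  *)
(* same as asserting its existence.                                     *)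
Record CLSemiring := {
  car :> Type;
  sadd : car -> car -> car;
  smul : car -> car -> car;
  szero : car;
  sone : car;
  saddA : forall x y z, sadd x (sadd y z) = sadd (sadd x y) z;
  saddC : forall x y, sadd x y = sadd y x;
  sadd0 : forall x, sadd szero x = x;
  smulA : forall x y z, smul x (smul y z) = smul (smul x y) z;
  smul1l : forall x, smul sone x = x;
  smul1r : forall x, smul x sone = x;
  smulDl : forall x y z, smul (sadd x y) z = sadd (smul x z) (smul y z);
  smulDr : forall x y z, smul x (sadd y z) = sadd (smul x y) (smul x z);
  smul0l : forall x, smul szero x = szero;
  smul0r : forall x, smul x szero = szero;
  ssup : (car -> Prop) -> car;
  snle_antisym : forall x y,
     (exists u, sadd x u = y) -> (exists u, sadd y u = x) -> x = y;
  ssup_ub : forall (T : car -> Prop) x, T x -> exists u, sadd x u = ssup T;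
  ssup_least : forall (T : car -> Prop) y,
     (forall x, T x -> exists u, sadd x u = y) -> exists u, sadd (ssup T) u = y
}.

Definition nle (K : CLSemiring) (s t : K) : Prop := exists u, sadd s u = t.

Definition top (K : CLSemiring) : K := ssup (fun _ : K => True).

(* partial sums / products  g 0 ⊕ ... ⊕ g n  (n+1 terms) *)
Definition psum (K : CLSemiring) (g : nat -> K) (n : nat) : K :=
  foldr (@sadd K) (szero K) [seq g i | i <- iota 0 n.+1].
Definition pprod (K : CLSemiring) (g : nat -> K) (n : nat) : K :=
  foldr (@smul K) (sone K) [seq g i | i <- iota 0 n.+1].

Definition isum (K : CLSemiring) (g : nat -> K) : K :=
  ssup (fun x => exists n, x = psum g n).
Definition iprod (K : CLSemiring) (g : nat -> K) : K :=
  ssup (fun x => exists n, x = pprod g n).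

Definition fsum (K : CLSemiring) n (g : 'I_n.+1 -> K) : K :=
  foldr (@sadd K) (szero K) [seq g i | i <- enum 'I_n.+1].
Definition fprod (K : CLSemiring) n (g : 'I_n.+1 -> K) : K :=
  foldr (@smul K) (sone K) [seq g i | i <- enum 'I_n.+1].

Inductive Seq (X : Type) : Type :=
  | SFin (n : nat) (f : 'I_n.+1 -> X)
  | SInf (f : nat -> X).

(* i (0-based) is a valid position of B, i.e. i+1 <= |B| *)
Definition in_range X (B : Seq X) (i : nat) : Prop :=
  match B with SFin n _ => i < n.+1 | SInf _ => True end.

(* Aggregators.  [AVar i] denotes the variable v_{i+1}.                 *)
Inductive aggr (K : CLSemiring) : Type :=
  | AConst (s : K)
  | AVar (i : nat)
  | ASum (F : Seq (aggr K))
  | AProd (F : Seq (aggr K)).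

Fixpoint aeval (K : CLSemiring) (env : nat -> K) (e : aggr K) : K :=
  match e with
  | AConst s => s
  | AVar i => env i
  | ASum (SFin n f) => fsum (fun i => aeval env (f i))
  | ASum (SInf f) => isum (fun k => aeval env (f k))
  | AProd (SFin n f) => fprod (fun i => aeval env (f i))
  | AProd (SInf f) => iprod (fun k => aeval env (f k))
  end.

Fixpoint vars_ok (K : CLSemiring) (P : nat -> Prop) (e : aggr K) : Prop :=
  match e with
  | AConst _ => True
  | AVar i => P i
  | ASum (SFin n f) => forall i, vars_ok P (f i)
  | ASum (SInf f) => forall k, vars_ok P (f k)
  | AProd (SFin n f) => forall i, vars_ok P (f i)
  | AProd (SInf f) => forall k, vars_ok P (f k)
  end.

(* [fNF] is given on all of A but only its values on NF are ever used;  *)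
(* likewise [Aggr a B] only matters when [step a B].                    *)
Record wARS (K : CLSemiring) := {
  wA : Type;
  step : wA -> Seq wA -> Prop;
  fNF : wA -> K;
  Aggr : wA -> Seq wA -> aggr K;
  Aggr_vars : forall a B, step a B -> vars_ok (in_range B) (Aggr a B)
}.

Definition NF (K : CLSemiring) (W : wARS K) (a : wA W) : Prop :=
  ~ exists B, step a B.

Inductive rtree (A : Type) : Type :=
  | RLeaf (a : A)
  | RNode (a : A) (ch : Seq (rtree A)).

Definition label A (t : rtree A) : A :=
  match t with RLeaf a => a | RNode a _ => a end.

Definition labels A (ch : Seq (rtree A)) : Seq A :=
  match ch with
  | SFin n f => SFin (fun i => label (f i))
  | SInf f => SInf (fun k => label (f k))
  end.

Fixpoint is_RT (K : CLSemiring) (W : wARS K) (t : rtree (wA W)) : Prop :=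
  match t with
  | RLeaf _ => True
  | RNode a ch =>
      step a (labels ch) /\
      match ch with
      | SFin n f => forall i, is_RT (f i)
      | SInf f => forall k, is_RT (f k)
      end
  end.

Fixpoint depth_le A (t : rtree A) (d : nat) : Prop :=
  match t with
  | RLeaf _ => True
  | RNode _ ch =>
      match d with
      | 0 => False
      | d'.+1 =>
          match ch with
          | SFin n f => forall i, depth_le (f i) d'
          | SInf f => forall k, depth_le (f k) d'
          end
      end
  end.

Definition finite_depth A (t : rtree A) : Prop := exists d, depth_le t d.

(* nodes are addressed by paths of (0-based) child indices from the root *)
Definition child A (ch : Seq (rtree A)) (j : nat) : option (rtree A) :=
  match ch with
  | SFin n f => match insub j with Some i => Some (f i) | None => None end
  | SInf f => Some (f j)
  end.

Fixpoint subtree_at A (p : list nat) (t : rtree A) : option (rtree A) :=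
  match p with
  | [::] => Some t
  | j :: q =>
      match t with
      | RLeaf _ => None
      | RNode _ ch =>
          match child ch j with Some c => subtree_at q c | None => None end
      end
  end.

Definition sub_mark (p : option (list nat)) (k : nat) : option (list nat) :=
  match p with
  | Some (j :: q) => if j == k then Some q else None
  | _ => None
  end.

(* Weight of a tree where the leaf at path [p] (if [p = Some _]) gets   *)
(* value [x] instead of its usual weight.                               *)
Fixpoint wtX (K : CLSemiring) (W : wARS K) (x : K) (p : option (list nat))
    (t : rtree (wA W)) : K :=
  match t with
  | RLeaf a =>
      match p with
      | Some [::] => x
      | _ => if excluded_middle_informative (NF a) then fNF a
             else szero K
      end
  | RNode a ch =>
      aeval
        (match ch with
         | SFin n f => fun k =>
             match insub k with
             | Some i => wtX x (sub_mark p k) (f i)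
             | None => szero K
             end
         | SInf f => fun k => wtX x (sub_mark p k) (f k)
         end)
        (Aggr a (labels ch))
  end.

Definition weight (K : CLSemiring) (W : wARS K) (t : rtree (wA W)) : K :=
  wtX (szero K) None t.

(* P_{v0}(T)(s): the induced weight polynomial evaluated at X := s *)
Definition polyval (K : CLSemiring) (W : wARS K) (t : rtree (wA W))
    (v0 : list nat) (s : K) : K :=
  wtX s (Some v0) t.

Definition sem (K : CLSemiring) (W : wARS K) (a : wA W) : K :=
  ssup (fun w => exists t : rtree (wA W),
          [/\ is_RT t, finite_depth t, label t = a & w = weight t]).

(* Grafting a copy of T onto the leaf v0 of T turns the weight s of the grafted tree into P_{v0}(T)(s).
   Iterating from the single leaf a yields reduction trees of finite depth with root a whose weights
   w_{n+1} = P_{v0}(T)(w_n) dominate w_n + t, hence the n-fold sums of t. So [[a]] bounds every partial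
   sum of t + t + ..., whose supremum is top. *)
From Stdlib Require Import FunctionalExtensionality.
From mathcomp Require Import all_boot.

Set Implicit Arguments.
Unset Strict Implicit.
Unset Printing Implicit Defensive.

Section CompleteLatticeSemiring.
Variable K : CLSemiring.
Implicit Types x y z : K.

Lemma sadd0r x : sadd x (szero K) = x.
Proof. by rewrite saddC sadd0. Qed.

Lemma nle_trans x y z : nle x y -> nle y z -> nle x z.
Proof. by move=> [u <-] [v <-]; exists (sadd u v); rewrite saddA. Qed.

Lemma nle_addl x y : nle y (sadd x y).
Proof. by exists x; rewrite saddC. Qed.

Lemma nle_add2l x y z : nle x y -> nle (sadd z x) (sadd z y).
Proof. by move=> [u <-]; exists u; rewrite saddA. Qed.

Lemma nle_top x : nle x (top K).
Proof. exact: ssup_ub. Qed.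

Lemma top_nle_eq x : nle (top K) x -> x = top K.
Proof. by move=> Htop; apply: snle_antisym (nle_top x) Htop. Qed.

Lemma isum_least (g : nat -> K) x : (forall n, nle (psum g n) x) -> nle (isum g) x.
Proof. by move=> Hg; apply: ssup_least => _ [n ->]; apply: Hg. Qed.

Lemma psum0 (g : nat -> K) : psum g 0 = g 0.
Proof. by rewrite /psum /= sadd0r. Qed.

Lemma psumS (g : nat -> K) n : psum g n.+1 = sadd (g 0) (psum (fun i => g i.+1) n).
Proof. by rewrite /psum -[iota 0 _]/(0 :: iota 1 n.+1) (iotaDl 1 0) map_cons -map_comp. Qed.

End CompleteLatticeSemiring.

Section Grafting.
Variable A : Type.
Implicit Types (t U : rtree A) (ch : Seq (rtree A)).

Lemma child_SFin n (f : 'I_n.+1 -> rtree A) (i : 'I_n.+1) : child (SFin f) i = Some (f i).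
Proof. by rewrite /= valK. Qed.

Lemma all_childP (P : rtree A -> Prop) ch :
  (forall k c, child ch k = Some c -> P c) <->
  match ch with SFin n f => forall i, P (f i) | SInf f => forall k, P (f k) end.
Proof.
case: ch => [n f|f]; split=> [Hch|Hf k c] /=.
- by move=> i; apply: (Hch i); rewrite child_SFin.
- by case: insubP => // i _ _ [<-].
- by move=> k; exact: (Hch k).
- by case=> <-.
Qed.

Lemma rtree_child_ind (P : rtree A -> Prop) :
  (forall a, P (RLeaf a)) ->
  (forall a ch, (forall k c, child ch k = Some c -> P c) -> P (RNode a ch)) ->
  forall t, P t.
Proof.
move=> Pleaf Pnode; fix IH 1 => -[a|a ch]; first exact: Pleaf.
apply: Pnode; apply/all_childP; case: ch => [n f|f] => [i|k]; exact: IH.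
Qed.

Lemma depth_le_mono t d e : depth_le t d -> d <= e -> depth_le t e.
Proof.
elim/rtree_child_ind: t d e => // a ch IH [|d] [|e] //=.
move=> /(all_childP (fun c => depth_le c d)) Hch le_de.
apply/(all_childP (fun c => depth_le c e)) => k c Hc.
exact: IH Hc _ _ (Hch k c Hc) le_de.
Qed.

Definition graft_child (j : nat) (g : rtree A -> rtree A) ch : Seq (rtree A) :=
  match ch with
  | SFin n f => SFin (fun i : 'I_n.+1 => if val i == j then g (f i) else f i)
  | SInf f => SInf (fun k => if k == j then g (f k) else f k)
  end.

Fixpoint graft (p : list nat) U t : rtree A :=
  match p, t with
  | [::], _ => U
  | j :: q, RNode a ch => RNode a (graft_child j (graft q U) ch)
  | _ :: _, RLeaf a => RLeaf a
  end.

Lemma child_graft j g ch k :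
  child (graft_child j g ch) k = if k == j then omap g (child ch k) else child ch k.
Proof.
case: ch => [n f|f] /=; last by case: eqP.
by case: insubP => [i _ <-|_]; case: eqP.
Qed.

Lemma labels_graft j g ch :
  (forall c, child ch j = Some c -> label (g c) = label c) ->
  labels (graft_child j g ch) = labels ch.
Proof.
case: ch => [n f|f] Hg /=; congr SFin || congr SInf; apply: functional_extensionality.
- by move=> i; case: eqP => // Hi; apply: Hg; rewrite -Hi child_SFin.
- by move=> k; case: eqP => // ->; apply: Hg.
Qed.

Lemma label_graft p U t :
  subtree_at p t = Some (RLeaf (label U)) -> label (graft p U t) = label t.
Proof. by case: p => [[->]|j q] //; case: t. Qed.

Lemma labels_graft_path j q U ch c :
  child ch j = Some c -> subtree_at q c = Some (RLeaf (label U)) ->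
  labels (graft_child j (graft q U) ch) = labels ch.
Proof. by move=> Hc Hq; apply: labels_graft => c'; rewrite Hc => -[<-]; exact: label_graft. Qed.

Lemma depth_graft p U t d e :
  depth_le t d -> depth_le U e -> depth_le (graft p U t) (d + e).
Proof.
elim: p t d => [|j q IH] t d /=; first by move=> _ HU; apply: depth_le_mono HU (leq_addl _ _).
case: t => [a _ _ //|a ch]; case: d => [[]|d] /=.
move=> /(all_childP (fun c => depth_le c d)) Hch HU.
apply/(all_childP (fun c => depth_le c (d + e))) => k c.
rewrite child_graft; case: eqP => _.
  by case Hc: (child ch k) => [c'|] //= [<-]; apply: IH HU; exact: Hch Hc.
by move=> Hc; apply: depth_le_mono (Hch _ _ Hc) (leq_addr _ _).
Qed.

End Grafting.

Section GraftedWeights.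
Variables (K : CLSemiring) (W : wARS K).
Implicit Types (t U : rtree (wA W)) (ch : Seq (rtree (wA W))).

Lemma is_RT_graft p U t :
  subtree_at p t = Some (RLeaf (label U)) -> is_RT t -> is_RT U -> is_RT (graft p U t).
Proof.
elim: p t => [|j q IH] [a|a ch] //= Hs [Hstep /all_childP Hch] HU.
case Hc: (child ch j) Hs => [c|//] Hq; rewrite (labels_graft_path Hc Hq); split=> //.
apply/all_childP => k c'; rewrite child_graft; case: eqP => [->|_]; last exact: Hch.
by rewrite Hc => -[<-]; apply: IH Hq (Hch _ _ Hc) HU.
Qed.

Lemma wtX_node x p a ch :
  wtX x p (RNode a ch) =
  aeval (fun k => oapp (wtX x (sub_mark p k)) (szero K) (child ch k)) (Aggr a (labels ch)).
Proof.
case: ch => [n f|f] //=; congr aeval; apply: functional_extensionality => k.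
by case: insub.
Qed.

Lemma wtX_unmarked x t : wtX x None t = weight t.
Proof.
elim/rtree_child_ind: t => // a ch IH; rewrite /weight !wtX_node.
congr aeval; apply: functional_extensionality => k.
by case Hc: (child ch k) => [c|] //=; exact: IH Hc.
Qed.

Lemma weight_graft p U t :
  subtree_at p t = Some (RLeaf (label U)) -> weight (graft p U t) = polyval t p (weight U).
Proof.
rewrite /polyval; elim: p t => [|j q IH] [a|a ch]; [by case=> -> | by case | by move=> /= |].
rewrite [subtree_at _ _]/=; case Hc: (child ch j) => [c|//] Hq.
rewrite /weight !wtX_node (labels_graft_path Hc Hq).
congr aeval; apply: functional_extensionality => k; rewrite child_graft /=.
case: eqP => [->|/eqP ne_kj]; first by rewrite Hc eqxx /=; exact: IH.
by rewrite eq_sym (negbTE ne_kj); case: (child ch k) => //= c'; rewrite (wtX_unmarked (weight U)).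
Qed.

End GraftedWeights.

Section Pumping.
Variables (K : CLSemiring) (W : wARS K) (a : wA W) (T : rtree (wA W)) (v0 : list nat).
Hypotheses (RT_T : is_RT T) (depth_T : finite_depth T) (label_T : label T = a)
  (leaf_v0 : subtree_at v0 T = Some (RLeaf a)).

Definition pump (n : nat) : rtree (wA W) := iter n (fun U => graft v0 U T) (RLeaf a).

Lemma pump_reduction_tree n : [/\ is_RT (pump n), finite_depth (pump n) & label (pump n) = a].
Proof.
have [d Td] := depth_T.
elim: n => [|n [RT_n [e depth_n] label_n]] /=; first by split=> //; exists 0.
have leaf_n : subtree_at v0 T = Some (RLeaf (label (pump n))) by rewrite label_n.
split; first exact: is_RT_graft.
- by exists (d + e); apply: depth_graft.
- by rewrite label_graft.
Qed.

Lemma weight_pumpS n : weight (pump n.+1) = polyval T v0 (weight (pump n)).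
Proof. by apply: weight_graft; have [_ _ ->] := pump_reduction_tree n. Qed.

Lemma weight_pump_le_sem n : nle (weight (pump n)) (sem a).
Proof. by apply: ssup_ub; exists (pump n); have [? ? ?] := pump_reduction_tree n. Qed.

Lemma psum_le_weight_pump (t : K) :
  (forall s, nle (sadd s t) (polyval T v0 s)) ->
  forall n, nle (psum (fun _ => t) n) (weight (pump n.+1)).
Proof.
move=> HP; elim=> [|n IH]; rewrite weight_pumpS; apply: nle_trans (HP _).
- by rewrite psum0; apply: nle_addl.
- by rewrite psumS [sadd _ t]saddC; apply: nle_add2l.
Qed.

End Pumping.

Theorem theorem41 (K : CLSemiring) (W : wARS K) (a : wA W)
    (T : rtree (wA W)) (v0 : list nat) (t : K) :
  is_RT T -> finite_depth T -> label T = a ->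
  v0 <> [::] -> subtree_at v0 T = Some (RLeaf a) ->
  isum (fun _ : nat => t) = top K ->
  (forall s : K, nle (sadd s t) (polyval T v0 s)) ->
  sem a = top K.
Proof.
move=> RT_T depth_T label_T _ leaf_v0 sum_t HP.
apply: top_nle_eq; rewrite -sum_t; apply: isum_least => n.
apply: nle_trans (psum_le_weight_pump RT_T depth_T label_T leaf_v0 HP n) _.
exact: weight_pump_le_sem.
Qed.
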